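(* Let $U$ be a finite set, $\mathcal{C}\subseteq 2^U$, and $f:2^U\to\mathbb{R}$ non-decreasing and $\varepsilon$-approximately $\mathcal{C}$-submodular for some $\varepsilon\ge 0$. Let $S\subseteq U$ be a Greedy Maximum Differential Set of $f$ (with ordering $s_1,\dots,s_{|S|}$) with $f(S)=f_{\max}$ and $\delta_{\min}>0$. Let $C\subseteq U$ be a nonempty set with $f(C)=f_{\max}$ whose elements admit an ordering $c_1,\dots,c_{|C|}$ such that $C_i=\{c_1,\dots,c_i\}\in\mathcal{C}$ for every $i=1,\dots,|C|$. Then $$|S|<\Big(1+\frac{\varepsilon}{\delta_{\min}}+\ln\Big(\frac{\delta_{\max}}{\delta_{\min}}\Big)\Big)\cdot|C|+1 .$$
   Context: For $f:2^U\to\mathbb{R}$, $A\subseteq U$, $x\in U$: $\Delta_x f(A)=f(A\cup\{x\})-f(A)$, $f_{\max}=\max_{X\subseteq U}f(X)$. $f$ is non-decreasing if $A\subseteq B\Rightarrow f(A)\le f(B)$. Given $\mathcal{C}\subseteq 2^U$, $f$ is $\varepsilon$-approximately $\mathcal{C}$-submodular if for every $A\subseteq U$, every $B\in\mathcal{C}$ and every $x\in U\setminus B$, $\Delta_x f(A\cup B)\le\Delta_x f(A)+\varepsilon$. A set $S\subseteq U$ is a Greedy Maximum Differential Set of $f$ if its elements can be ordered $s_1,\dots,s_{|S|}$ such that, with $S_0=\emptyset$, $S_i=\{s_1,\dots,s_i\}$, for every $i$: $\Delta_{s_i}f(S_{i-1})\ge\Delta_u f(S_{i-1})$ for all $u\in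 U$. For such $S$: $\delta_{\max}=\Delta_{s_1}f(\emptyset)=\max_{x\in U}\Delta_x f(\emptyset)$ and $\delta_{\min}=\min_{1\le i\le|S|}\Delta_{s_i}f(S_{i-1})$. *)

From mathcomp Require Import all_boot all_order all_algebra.
From mathcomp Require Import reals exp.
Set Implicit Arguments. Unset Strict Implicit. Unset Printing Implicit Defensive.
Import Order.TTheory GRing.Theory Num.Theory.
Local Open Scope ring_scope.

Section Defs.
Variables (R : realType) (U : finType).

Definition Delta (f : {set U} -> R) (x : U) (A : {set U}) : R :=
  f (x |: A) - f A.

Definition fmax (f : {set U} -> R) : R :=
  \big[Num.max/f set0]_(X : {set U}) f X.

Definition nondecreasing_set (f : {set U} -> R) : Prop :=
  forall A B : {set U}, A \subset B -> f A <= f B.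

Definition approx_submodular (eps : R) (CC : {set {set U}}) (f : {set U} -> R) : Prop :=
  forall (A B : {set U}) (x : U), B \in CC -> x \notin B ->
    Delta f x (A :|: B) <= Delta f x A + eps.

(* s is a greedy ordering s_1,...,s_k of S: distinct elements, S = {s_1..s_k},
   and at each step s_i maximizes Delta_u f(S_{i-1}) over u in U. *)
Definition greedy_ordering (f : {set U} -> R) (S : {set U}) (s : seq U) : Prop :=
  [/\ uniq s, [set x in s] = S &
      forall (p q : seq U) (x : U), s = p ++ x :: q ->
        forall u : U, Delta f u [set y in p] <= Delta f x [set y in p]].

Definition is_GMDS (f : {set U} -> R) (S : {set U}) : Prop :=
  exists s, greedy_ordering f S s.

Fixpoint gains (f : {set U} -> R) (acc : {set U}) (s : seq U) : seq R :=
  match s with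
  | [::] => [::]
  | x :: s' => Delta f x acc :: gains f (x |: acc) s'
  end.

(* delta_min = min_i Delta_{s_i} f(S_{i-1}) (convention: 0 for empty s) *)
Definition delta_min (f : {set U} -> R) (s : seq U) : R :=
  let g := gains f set0 s in \big[Num.min/head 0 g]_(d <- g) d.

Definition delta_max (f : {set U} -> R) : R :=
  \big[Num.max/0]_(x : U) Delta f x set0.

End Defs.

From mathcomp Require Import all_boot all_order all_algebra.
From mathcomp Require Import reals exp.
From mathcomp Require Import sequences ring lra.
Set Implicit Arguments. Unset Strict Implicit. Unset Printing Implicit Defensive.
Import Order.TTheory GRing.Theory Num.Theory.
Local Open Scope ring_scope.

(* Let r_i = f_max - f(S_i) be the residual after i greedy steps and g_i the i-th greedy gain.
   Since every prefix C_j lies in the class, adding C to S_i one element at a time and using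
   monotonicity gives r_i <= |C| (g_i + eps); as r_i - r_{i+1} = g_i, this is the contraction
   r_{i+1} - |C| eps <= (1 - 1/|C|) (r_i - |C| eps).  Hence after i = ceil(|C| ln(dmax/dmin))
   steps r_i <= |C| (eps + dmin), and since every step decreases r by at least dmin, at most
   |C| eps/dmin + |C| steps remain. *)

Lemma nat_ceil_itv (R : realType) (x : R) :
  0 <= x -> exists n : nat, x <= n%:R < x + 1.
Proof.
move=> x0; exists `|Num.ceil x|%N.
have c0 : 0 <= Num.ceil x by rewrite -(@ler_int R) (le_trans x0) ?ceil_ge.
rewrite natr_absz ger0_norm // ceil_ge /=.
by have := ceilB1_lt x; rewrite intrB; lra.
Qed.

Lemma expr_1B_le_expR (R : realType) (t : R) (n : nat) :
  t <= 1 -> (1 - t) ^+ n <= expR (- (n%:R * t)).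
Proof.
move=> t1; rewrite -mulrN expRM_natl lerXn2r ?nnegrE ?expR_ge0 ?subr_ge0 //.
exact: expR_ge1Dx.
Qed.

Lemma expr_1BVn_le_div (R : realType) (m i : nat) (a b : R) :
  (0 < m)%N -> 0 < a -> 0 < b -> m%:R * ln (b / a) <= i%:R ->
  (1 - m%:R^-1) ^+ i <= a / b.
Proof.
move=> m0 a0 b0 mi; have mR0 : 0 < (m%:R : R) by rewrite ltr0n.
apply: le_trans (expr_1B_le_expR i (_ : m%:R^-1 <= 1)) _; first by rewrite invf_le1 // ler1n.
have -> : a / b = expR (- ln (b / a)).
  by rewrite expRN lnK ?invf_div // posrE divr_gt0.
by rewrite ler_expR lerN2 ler_pdivlMr // mulrC.
Qed.

Section ResidualSequences.
Variable R : realType.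
Implicit Types (r : nat -> R) (k : nat).

Lemma geometric_decay r (q b : R) k :
  0 <= q -> (forall i, (i < k)%N -> r i.+1 - b <= q * (r i - b)) ->
  forall i, (i <= k)%N -> r i - b <= q ^+ i * (r 0%N - b).
Proof.
move=> q0 step; elim=> [|i IH] ik; first by rewrite expr0 mul1r.
rewrite exprS -mulrA; apply: le_trans (step i ik) _.
by rewrite ler_wpM2l // IH // ltnW.
Qed.

Lemma telescope_lower_bound r (d : R) k :
  (forall i, (i < k)%N -> d <= r i - r i.+1) ->
  forall j, (j <= k)%N -> j%:R * d <= r (k - j)%N - r k.
Proof.
move=> step; elim=> [|j IH] jk; first by rewrite subn0 mul0r subrr.
have kj : (k - j.+1 < k)%N by rewrite ltn_subrL (leq_ltn_trans _ jk).
have := step _ kj; rewrite subnSK // -addn1 natrD mulrDl mul1r.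
by have := IH (ltnW jk); lra.
Qed.

Lemma residual_steps_bound r k (m : nat) (d dM eps : R) :
  (0 < m)%N -> 0 < d -> d <= dM -> 0 <= eps -> 0 <= r k ->
  r 0%N <= m%:R * (dM + eps) ->
  (forall i, (i < k)%N -> d <= r i - r i.+1) ->
  (forall i, (i < k)%N -> r i <= m%:R * (r i - r i.+1 + eps)) ->
  k%:R < (1 + eps / d + ln (dM / d)) * m%:R + 1.
Proof.
move=> m0 d0 ddM eps0 rk0 r0 r_drop r_contract.
have mR0 : 0 < (m%:R : R) by rewrite ltr0n.
have L0 : 0 <= ln (dM / d) by rewrite ln_ge0 // ler_pdivlMr // mul1r.
have [i /andP[xi ix]] := nat_ceil_itv (mulr_ge0 (ltW mR0) L0).
have epsd0 : 0 <= m%:R * (eps / d) by rewrite mulr_ge0 ?divr_ge0 // ltW.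
have -> : (1 + eps / d + ln (dM / d)) * m%:R + 1 =
    m%:R + m%:R * (eps / d) + m%:R * ln (dM / d) + 1 by ring.
have [ki|ik] := leqP k i; first by move: ki; rewrite -(ler_nat R); lra.
pose q := 1 - (m%:R : R)^-1.
have q0 : 0 <= q by rewrite subr_ge0 invf_le1 // ler1n.
have decay : r i - m%:R * eps <= q ^+ i * (r 0%N - m%:R * eps).
  apply: (@geometric_decay r q (m%:R * eps) k q0 _ i (ltnW ik)) => j jk.
  have := r_contract j jk; rewrite -ler_pdivrMl // mulrC.
  have -> : q * (r j - m%:R * eps) = r j - m%:R * eps - r j / m%:R + eps.
    by rewrite /q; field; rewrite gt_eqF.
  lra.
have qi : q ^+ i <= d / dM by apply: expr_1BVn_le_div; rewrite // (lt_le_trans d0).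
have ri : r i <= m%:R * eps + m%:R * d.
  have qi0 : 0 <= q ^+ i by rewrite exprn_ge0.
  have dMm : q ^+ i * (m%:R * dM) <= m%:R * d.
    apply: le_trans (ler_wpM2r _ qi) _; first by rewrite mulr_ge0 ?ltW // (lt_le_trans d0).
    by rewrite mulrCA mulfVK // gt_eqF // (lt_le_trans d0).
  have r0' : r 0%N - m%:R * eps <= m%:R * dM by move: r0; rewrite mulrDr; lra.
  have := ler_wpM2l qi0 r0'; move: decay dMm; clear; lra.
have := telescope_lower_bound r_drop (leq_subr i k).
have ik' := ltnW ik; rewrite subKn // natrB // => tel.
have : (k%:R - i%:R) * d <= (m%:R * (eps / d) + m%:R) * d.
  have -> : (m%:R * (eps / d) + m%:R) * d = m%:R * eps + m%:R * d.
    by field; rewrite gt_eqF.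
  by move: tel ri rk0; clear; lra.
rewrite ler_pM2r //; move: ix; clear; lra.
Qed.

End ResidualSequences.

Section SetFunctions.
Variables (R : realType) (U : finType) (f : {set U} -> R).
Implicit Types (s c : seq U) (A : {set U}).

Lemma set_take0 s : [set x in take 0 s] = set0.
Proof. by apply/setP => y; rewrite take0 !inE. Qed.

Lemma set_takeS s x0 i :
  (i < size s)%N -> [set x in take i.+1 s] = nth x0 s i |: [set x in take i s].
Proof. by move=> ?; apply/setP => y; rewrite (take_nth x0) // !inE mem_rcons in_cons. Qed.

Lemma nth_notin_take s x0 i : uniq s -> (i < size s)%N -> nth x0 s i \notin take i s.
Proof.
rewrite -{1}(cat_take_drop i s) cat_uniq => /and3P[_ disj _] ?.
by apply: contra disj => ?; apply/hasP; exists (nth x0 s i); rewrite // (drop_nth x0) ?mem_head.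
Qed.

Lemma approx_submodular_chain_gain eps CC c A G :
  0 <= eps -> approx_submodular eps CC f -> uniq c ->
  (forall i, (1 <= i <= size c)%N -> [set x in take i c] \in CC) ->
  (forall u, Delta f u A <= G) ->
  forall n, (n <= size c)%N -> f (A :|: [set x in take n c]) - f A <= n%:R * (G + eps).
Proof.
move=> eps0 sub uc chainCC gainA; elim=> [|n IH] nc.
  by rewrite set_take0 setU0 subrr mul0r.
case: c => [//|x0 c'] in uc chainCC nc IH *.
set c := x0 :: c' in uc chainCC nc IH *.
set x := nth x0 c n.
have step : Delta f x (A :|: [set y in take n c]) <= Delta f x A + eps.
  have [->|n0] := eqVneq n 0%N; first by rewrite set_take0 setU0 lerDl.
  by apply: sub; [apply: chainCC; rewrite lt0n n0 ltnW | rewrite inE nth_notin_take].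
have := IH (ltnW nc); have := gainA x.
rewrite (set_takeS x0 nc) setUCA -addn1 natrD mulrDl mul1r.
by move: step; rewrite /Delta; lra.
Qed.

Lemma fmax_sub_le_chain_gain eps CC c A G :
  0 <= eps -> nondecreasing_set f -> approx_submodular eps CC f -> uniq c ->
  (forall i, (1 <= i <= size c)%N -> [set x in take i c] \in CC) ->
  f [set x in c] = fmax f -> (forall u, Delta f u A <= G) ->
  fmax f - f A <= (size c)%:R * (G + eps).
Proof.
move=> eps0 mono sub uc chainCC fC gainA.
have := approx_submodular_chain_gain eps0 sub uc chainCC gainA (leqnn _).
have : fmax f <= f (A :|: [set x in c]) by rewrite -fC mono // subsetUr.
by rewrite take_size; lra.
Qed.

Lemma greedy_gain_ge S s x0 i :
  greedy_ordering f S s -> (i < size s)%N -> forall u,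
  Delta f u [set x in take i s] <= Delta f (nth x0 s i) [set x in take i s].
Proof.
case=> _ _ greedy si u; apply: (greedy _ (drop i.+1 s)).
by rewrite -(drop_nth x0 si) cat_take_drop.
Qed.

Lemma size_gains A s : size (gains f A s) = size s.
Proof. by elim: s A => [|a s IH] A //=; rewrite IH. Qed.

Lemma nth_gains A s i x0 :
  (i < size s)%N -> nth 0 (gains f A s) i = Delta f (nth x0 s i) (A :|: [set x in take i s]).
Proof.
elim: s A i => [|a s IH] A [|i] //= si; last rewrite IH //.
all: congr Delta; apply/setP => y; rewrite !inE ?orbF //.
by rewrite -orbA orbCA.
Qed.

Lemma delta_min_le_gain s x0 i :
  (i < size s)%N -> delta_min f s <= Delta f (nth x0 s i) [set x in take i s].
Proof.
move=> si; rewrite -[X in Delta f _ X]set0U -nth_gains //.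
by rewrite /delta_min ge_bigmin_seq // mem_nth // size_gains.
Qed.

Lemma Delta_le_delta_max u : Delta f u set0 <= delta_max f.
Proof. exact: (le_bigmax 0 (fun x => Delta f x set0) u). Qed.

End SetFunctions.

Theorem mainTheorem2 (R : realType) (U : finType) (CC : {set {set U}})
    (f : {set U} -> R) (eps : R) (S C : {set U}) (s c : seq U) :
  0 <= eps ->
  nondecreasing_set f ->
  approx_submodular eps CC f ->
  greedy_ordering f S s ->
  f S = fmax f ->
  0 < delta_min f s ->
  C != set0 ->
  f C = fmax f ->
  uniq c -> [set x in c] = C ->
  (forall i : nat, (1 <= i <= size c)%N -> [set x in take i c] \in CC) ->
  (#|S|%:R : R) <
    (1 + eps / delta_min f s + ln (delta_max f / delta_min f s)) * (#|C|%:R) + 1.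
Proof.
move=> eps0 mono sub greedy fS d0 C0 fC uc cC chainCC.
have [us sS _] := greedy.
case: s => [|x0 s'] in greedy us sS fS d0 *; first by rewrite /delta_min big_nil ltxx in d0.
set s := x0 :: s' in greedy us sS fS d0 *.
rewrite -sS -cC !cardsE !(card_uniqP _) //.
have fc : f [set x in c] = fmax f by rewrite cC.
have residual A G := fmax_sub_le_chain_gain (A := A) (G := G) eps0 mono sub uc chainCC fc.
pose r i := fmax f - f [set x in take i s].
have r_step i : (i < size s)%N -> r i - r i.+1 = Delta f (nth x0 s i) [set x in take i s].
  by move=> si; rewrite /r (set_takeS x0 si) /Delta; lra.
apply: (@residual_steps_bound _ r).
- by rewrite lt0n size_eq0; apply: contraNneq C0 => c0; apply/eqP/setP => y; rewrite -cC c0 !inE.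
- exact: d0.
- apply: le_trans (delta_min_le_gain f (s := s) x0 (ltn0Sn _)) _.
  by rewrite set_take0 Delta_le_delta_max.
- exact: eps0.
- by rewrite /r take_size sS fS subrr.
- by apply: residual => u; rewrite set_take0 Delta_le_delta_max.
- by move=> i si; rewrite r_step // delta_min_le_gain.
- move=> i si; rewrite r_step //; apply: residual.
  exact (greedy_gain_ge x0 greedy si).
Qed.
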